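(* Let $p,q\ge 1$ and let $P(p,q)$ be the parallelogram hexagonal system with $p$ rows of $q$ hexagons each, so it has $n=pq$ hexagons. Then $cf(P(p,q))=pq+1=n+1$.
   Context: A hexagonal system (HS) is a finite 2-connected plane graph in which every interior face is a regular hexagon of the hexagonal lattice; it is drawn with some edges vertical, so that hexagons form horizontal rows in which consecutive hexagons share a vertical edge. $P(p,q)$ consists of $p$ horizontal rows, each a linear chain of $q$ hexagons, where each row lies directly above the previous one shifted half a hexagon to the right (so hexagon $j$ of row $i+1$ shares edges with hexagons $j$ and $j+1$ of row $i$ when they exist); it is a parallelogram (rhombus-shaped) benzenoid. In particular $P(1,q)$ is the linear hexagonal chain of $q$ hexagons. For a perfect matching $M$, a forcing set of $M$ is a subset of $M$ contained in no other perfect matching; a complete forcing set of $G$ is a set $S\subseteq E(G)$ with $S\cap M$ a forcing set of $M$ for every perfect matching $M$; $cf(G)$ is the minimum size of a complete forcing set. *)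

From mathcomp Require Import all_boot.
Set Implicit Arguments. Unset Strict Implicit. Unset Printing Implicit Defensive.

Section Matchings.
Variable T : finType.
Variables (V : {set T}) (E : {set {set T}}).

Definition perfect_matching (M : {set {set T}}) : Prop :=
  M \subset E /\ forall v, v \in V -> #|[set e in M | v \in e]| = 1.

Definition forcing_set (M S : {set {set T}}) : Prop :=
  S \subset M /\
  forall M', perfect_matching M' -> S \subset M' -> M' = M.

Definition complete_forcing_set (S : {set {set T}}) : Prop :=
  S \subset E /\
  forall M, perfect_matching M -> forcing_set M (S :&: M).

Definition cf_is (k : nat) : Prop :=
  (exists S, complete_forcing_set S /\ #|S| = k) /\
  (forall S, complete_forcing_set S -> k <= #|S|).

End Matchings.

(* ---------- The parallelogram hexagonal system P(p,q) ----------
   Brick-wall model of the hexagonal lattice: lattice points (x,y); the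
   hexagon with lower-left corner (x0,y0) has vertices (x0+a, y0+b),
   a in {0,1,2}, b in {0,1}, horizontal edges (x0+a,y0+b)-(x0+a+1,y0+b)
   (a in {0,1}) and vertical edges (x0,y0)-(x0,y0+1), (x0+2,y0)-(x0+2,y0+1).
   Hexagon j (0 <= j < q) of row i (0 <= i < p) has lower-left corner
   (2j + i, i): consecutive hexagons of a row share a vertical edge, and row
   i+1 is shifted half a hexagon (one unit) to the right, so hexagon j of
   row i+1 shares a horizontal edge with hexagons j and j+1 of row i. *)

Definition PV (p q : nat) : finType := ('I_(2 * q + p).+1 * 'I_p.+1)%type.

Definition pt (p q x y : nat) : PV p q := (inord x, inord y).

Definition hex_edges (p q i j : nat) : {set {set PV p q}} :=
  let x0 := 2 * j + i in
  let y0 := i in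
  [set [set pt p q x0 y0; pt p q x0.+1 y0];
       [set pt p q x0.+1 y0; pt p q x0.+2 y0];
       [set pt p q x0 y0.+1; pt p q x0.+1 y0.+1];
       [set pt p q x0.+1 y0.+1; pt p q x0.+2 y0.+1];
       [set pt p q x0 y0; pt p q x0 y0.+1];
       [set pt p q x0.+2 y0; pt p q x0.+2 y0.+1]].

Definition PE (p q : nat) : {set {set PV p q}} :=
  \bigcup_(i < p) \bigcup_(j < q) hex_edges p q i j.

Definition PVs (p q : nat) : {set PV p q} := \bigcup_(e in PE p q) e.

From HB Require Import structures.
From mathcomp Require Import all_boot zify.
Set Implicit Arguments. Unset Strict Implicit. Unset Printing Implicit Defensive.

(* On level y (0 <= y <= p) the vertices of P(p,q) read, from
   left to right, Ov y 0, Ev y 0, Ov y 1, Ev y 1, ...  Every edge is named by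
   a label: the horizontal edges Ov y m -- Ev y m (HorOE y m) and
   Ev y m -- Ov y m.+1 (HorEO y m), and the vertical edges Ev y m -- Ov y.+1 m
   (Vert y m).

   Row by row, a perfect matching uses exactly one vertical
   edge between levels y - 1 and y, at position k y; the function k is
   nondecreasing with k 0 = 0 and k p.+1 = q, and conversely every such
   "height function" k yields a perfect matching matching_of k.  Think of the
   hexagon in row r, column s as the cell (r, s) (1 <= r <= p, 1 <= s <= q);
   the cells with s > k r are shaded, and an edge belongs to matching_of k iff
   the shading of the two cells on either side of it follows a fixed pattern.

   A snake visiting all pq cells, each step crossing an edge,
   plus one entry edge gives pq + 1 edges.  If two height functions differ,
   some cell is shaded for exactly one of them; walking along the snake from
   that cell one meets a crossed edge lying in one matching and not the
   other, so these edges form a complete forcing set.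

   A complete forcing set must separate any two distinct perfect
   matchings.  Shading or unshading a single cell, resp. going from the
   lowest to the highest height function, gives pq + 1 pairs of matchings; a
   separating edge lies on the corresponding cell, resp. off all cells, so the
   pq + 1 separating edges are pairwise distinct. *)

Lemma complete_forcing_setP (T : finType) (V : {set T}) (E S : {set {set T}}) :
  complete_forcing_set V E S <->
  S \subset E /\ forall M M', perfect_matching V E M -> perfect_matching V E M' ->
    M' != M -> exists2 e, e \in S :&: M & e \notin M'.
Proof.
split=> [[sub cfs]|[sub sep]].
  split=> // M M' hM hM' neq; have [_ forced] := cfs M hM.
  have : ~~ (S :&: M \subset M').
    by apply/negP => /(forced M' hM') eqM; rewrite eqM eqxx in neq.
  by case/subsetPn => e he hn; exists e.
split=> // M hM; split=> [|M' hM' hS]; first exact: subsetIr.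
apply/eqP; apply/negPn/negP => neq; have [e he hn] := sep M M' hM hM' neq.
by rewrite (subsetP hS _ he) in hn.
Qed.

Lemma sum_eq_lt (b m : nat) : \sum_(0 <= i < m) (i == b) = (b < m).
Proof.
elim: m => [|m IH]; first by rewrite big_geq.
rewrite big_nat_recr //= IH; lia.
Qed.

Lemma sum_bool_eq1 (f : nat -> bool) n :
  \sum_(0 <= i < n) f i = 1 -> exists2 b, b < n & forall i, i < n -> f i = (i == b).
Proof.
elim: n => [|n IH]; first by rewrite big_geq.
rewrite big_nat_recr //=; case fn: (f n) => /= hs.
- have f0 : forall i, i < n -> f i = false.
    move=> i lt; have /eqP := hs; rewrite addn1 eqSS sum_nat_seq_eq0 => /allP/(_ i).
    by rewrite mem_index_iota lt /= => /(_ isT)/eqP; case: (f i).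
  exists n => // i; rewrite ltnS leq_eqVlt => /orP[/eqP->|lt]; first by rewrite fn eqxx.
  by rewrite f0 // ltn_eqF.
- have [b bn fb] := IH (etrans (esym (addn0 _)) hs).
  exists b; first exact: ltnW.
  move=> i; rewrite ltnS leq_eqVlt => /orP[/eqP->|]; last exact: fb.
  by rewrite fn; apply/esym/eqP => en; move: bn; rewrite -en ltnn.
Qed.

Lemma sum_select n (b : nat) : \sum_(i < n) i * (i == b :> nat) = if b < n then b else 0.
Proof.
elim: n => [|n IH]; first by rewrite big_ord0.
rewrite big_ord_recr /= IH; case: ifP => h1; case: ifP => h2; lia.
Qed.

(* The
   indicators hA m, hB m describe the two horizontal edges at position m,
   vd m and vu m the vertical edges arriving from below and leaving upwards. *)
Section Row.
Variables (a n : nat) (hA hB vd vu : nat -> bool).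
Hypotheses (a_le_n : a <= n) (vd_at_a : forall m, m <= n -> vd m = (m == a))
  (hB_n : hB n = false)
  (odd_cover : forall m, m <= n -> ((0 < m) && hB m.-1) + hA m + vd m = 1)
  (even_cover : forall m, m <= n -> hA m + hB m + vu m = 1).

Let carry m := (0 < m) && hB m.-1.
Let ups m := \sum_(0 <= i < m) vu i.

(* Left of position m, the edges from below exceed the ones going up by the
   one still carried horizontally into position m. *)
Lemma row_invariant m : m <= n.+1 -> carry m + ups m = (a < m).
Proof.
elim: m => [|m IH] hm; first by rewrite /carry /ups big_geq.
have := IH (ltnW hm); have := odd_cover hm; have := even_cover hm; have := vd_at_a hm.
rewrite /carry /ups big_nat_recr //=; lia.
Qed.

Lemma row_up_unique : exists2 b, a <= b <= n &
  forall m, m <= n.+1 -> ups m = (b < m).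
Proof.
have hn := row_invariant (leqnn n.+1); rewrite /carry /= hB_n ltnS a_le_n in hn.
have [b bn vub] := sum_bool_eq1 hn.
have upsE m : m <= n.+1 -> ups m = (b < m).
  move=> hm; rewrite /ups -sum_eq_lt; apply: eq_big_nat => i /andP[_ hi].
  by rewrite vub //; lia.
exists b => //; apply/andP; split=> //.
have ha : a <= n.+1 by apply: leq_trans a_le_n _.
by have := row_invariant ha; rewrite upsE //; lia.
Qed.

Lemma row_structure : exists b, [/\ a <= b <= n, (forall m, m <= n -> vu m = (m == b)),
     (forall m, m <= n -> hA m = (m < a) || (b < m)) &
     (forall m, m <= n -> hB m = (a <= m) && (m < b))].
Proof.
have [b /andP[ab bn] upsE] := row_up_unique.
have inv m : m <= n.+1 -> carry m + (b < m) = (a < m).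
  by move=> hm; rewrite -upsE // row_invariant.
exists b; split; first by rewrite ab.
- move=> m hm; have := upsE m.+1; rewrite /ups big_nat_recr //= -/(ups m) upsE; lia.
- move=> m hm; have := odd_cover hm; have := inv m; have := vd_at_a hm.
  rewrite /carry; case: m hm => [|m] hm /=; lia.
- move=> m hm; have := inv m.+1; rewrite /carry /=; lia.
Qed.

End Row.

Inductive edge_label := HorOE of nat & nat | HorEO of nat & nat | Vert of nat & nat.

Definition label_eqb (l l' : edge_label) : bool :=
  match l, l' with
  | HorOE y m, HorOE y' m' | HorEO y m, HorEO y' m' | Vert y m, Vert y' m' =>
      (y == y') && (m == m')
  | _, _ => false
  end.

Lemma label_eqP : Equality.axiom label_eqb.
Proof.
by case=> y m [] y' m' /=; apply: (iffP idP) => // [/andP[/eqP-> /eqP->]|[-> ->]] //;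
  rewrite !eqxx.
Qed.
HB.instance Definition _ := hasDecEq.Build edge_label label_eqP.

Lemma label_eqE (l l' : edge_label) : (l == l') = label_eqb l l'.
Proof. by []. Qed.

Section Parallelogram.
Variables p q : nat.
Hypothesis hp : 0 < p.
Hypothesis hq : 0 < q.

Local Notation T := (PV p q).

Definition Ev (y m : nat) : T := pt p q (y + 2 * m) y.
Definition Ov (y m : nat) : T := pt p q (y + 2 * m - 1) y.

Lemma pt_eqE x y x' y' : x <= 2 * q + p -> y <= p -> x' <= 2 * q + p -> y' <= p ->
  (pt p q x y == pt p q x' y') = (x == x') && (y == y').
Proof.
move=> hx hy hx' hy'; apply/eqP/andP => [|[/eqP-> /eqP->]] //.
move/(congr1 (fun v : T => (val v.1, val v.2))) => /=.
by rewrite !inordK ?ltnS // => -[-> ->].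
Qed.

Definition edge_of (l : edge_label) : {set T} :=
  match l with
  | HorOE y m => [set Ov y m; Ev y m]
  | HorEO y m => [set Ev y m; Ov y m.+1]
  | Vert y m => [set Ev y m; Ov y.+1 m]
  end.

Definition valid_label (l : edge_label) : bool :=
  match l with
  | HorOE y m => [&& y <= p, m <= q, (y != 0) || (m != 0) & (y != p) || (m != q)]
  | HorEO y m => (y <= p) && (m < q)
  | Vert y m => (y < p) && (m <= q)
  end.

Definition valid_Ev y m := [&& y <= p, m <= q & (y != p) || (m != q)].
Definition valid_Ov y m := [&& y <= p, m <= q & (y != 0) || (m != 0)].

Lemma valid_label_ends l : valid_label l -> match l with
  | HorOE y m => valid_Ev y m /\ valid_Ov y m
  | HorEO y m => valid_Ev y m /\ valid_Ov y m.+1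
  | Vert y m => valid_Ev y m /\ valid_Ov y.+1 m end.
Proof. by case: l => y m /=; rewrite /valid_Ev /valid_Ov; split; lia. Qed.

Definition labels_at_Ev y m : seq edge_label := [:: HorOE y m; HorEO y m; Vert y m].

Definition labels_at_Ov y m : seq edge_label :=
  HorOE y m :: (if m is m'.+1 then [:: HorEO y m'] else [::]) ++
               (if y is y'.+1 then [:: Vert y' m] else [::]).

Lemma uniq_labels_at_Ev y m : uniq (labels_at_Ev y m).
Proof. by rewrite /= ?in_cons ?in_nil ?label_eqE. Qed.

Lemma uniq_labels_at_Ov y m : uniq (labels_at_Ov y m).
Proof. by case: m => [|m]; case: y => [|y]; rewrite /= ?in_cons ?in_nil ?label_eqE. Qed.

Lemma Ev_in_edge l y m : valid_label l -> valid_Ev y m ->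
  (Ev y m \in edge_of l) = (l \in labels_at_Ev y m).
Proof.
case: l => y' m' /= hv hE; rewrite !inE /Ev /Ov /valid_Ev in hE *;
  rewrite !label_eqE /= !pt_eqE; lia.
Qed.

Lemma Ov_in_edge l y m : valid_label l -> valid_Ov y m ->
  (Ov y m \in edge_of l) = (l \in labels_at_Ov y m).
Proof.
case: l => y' m' /= hv hO; rewrite !inE /Ev /Ov /valid_Ov in hO *;
  case: m hO => [|m] hO; case: y hO => [|y] hO /=;
  rewrite ?inE ?label_eqE /= !pt_eqE; lia.
Qed.

Lemma edge_of_inj l l' : valid_label l -> valid_label l' -> edge_of l = edge_of l' -> l = l'.
Proof.
move=> hl hl' E; apply/eqP; rewrite label_eqE.
have := valid_label_ends hl.
case: l hl E => y m /= hl E [hE hO];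
  have := Ev_in_edge hl' hE; have := Ov_in_edge hl' hO;
  rewrite -E !inE !eqxx /= ?orbT => inO inE; clear E hE hO.
- case: l' hl' inO inE => y' m' /= _; case: m hl => [|m]; case: y => [|y] /= hl;
    rewrite ?inE ?in_nil ?label_eqE /=; lia.
- case: l' hl' inO inE => y' m' /= _; case: y hl => [|y] /= _;
    rewrite ?inE ?in_nil ?label_eqE /=; lia.
- case: l' hl' inO inE => y' m' /= _; case: m hl => [|m] /= _;
    rewrite ?inE ?in_nil ?label_eqE /=; lia.
Qed.

Lemma hex_edgesE i j : hex_edges p q i j =
  [set edge_of (HorEO i j); edge_of (HorOE i j.+1); edge_of (HorOE i.+1 j);
       edge_of (HorEO i.+1 j); edge_of (Vert i j); edge_of (Vert i j.+1)].
Proof.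
rewrite /hex_edges /edge_of /Ev /Ov.
have -> : i + 2 * j = 2 * j + i by lia.
have -> : i + 2 * j.+1 - 1 = (2 * j + i).+1 by lia.
have -> : i + 2 * j.+1 = (2 * j + i).+2 by lia.
have -> : i.+1 + 2 * j - 1 = 2 * j + i by lia.
have -> : i.+1 + 2 * j = (2 * j + i).+1 by lia.
by have -> : i.+1 + 2 * j.+1 - 1 = (2 * j + i).+2 by lia.
Qed.

Lemma hex_edge_in_PE i j e : i < p -> j < q -> e \in hex_edges p q i j -> e \in PE p q.
Proof.
move=> hi hj he; apply/bigcupP; exists (Ordinal hi) => //.
by apply/bigcupP; exists (Ordinal hj).
Qed.

Lemma valid_edge_in_PE l : valid_label l -> edge_of l \in PE p q.
Proof.
case: l => y m /= hv.
- case: (boolP ((y < p) && (0 < m))) => h.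
    apply: (@hex_edge_in_PE y m.-1); try lia.
    by rewrite hex_edgesE !inE (_ : m.-1.+1 = m) ?eqxx ?orbT //; lia.
  apply: (@hex_edge_in_PE y.-1 m); try lia.
  by rewrite hex_edgesE !inE (_ : y.-1.+1 = y) ?eqxx ?orbT //; lia.
- case: (ltnP y p) => h.
    by apply: (@hex_edge_in_PE y m); rewrite ?hex_edgesE ?inE ?eqxx //; lia.
  apply: (@hex_edge_in_PE p.-1 m); try lia.
  by rewrite hex_edgesE !inE (_ : p.-1.+1 = y) ?eqxx ?orbT //; lia.
- case: (ltnP m q) => h.
    by apply: (@hex_edge_in_PE y m); rewrite ?hex_edgesE ?inE ?eqxx ?orbT //; lia.
  apply: (@hex_edge_in_PE y q.-1); try lia.
  by rewrite hex_edgesE !inE (_ : q.-1.+1 = m) ?eqxx ?orbT //; lia.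
Qed.

Lemma PE_labelP e : e \in PE p q <-> exists2 l, valid_label l & e = edge_of l.
Proof.
split=> [|[l hl ->]]; last exact: valid_edge_in_PE.
case/bigcupP=> i _ /bigcupP[j _]; rewrite hex_edgesE !inE.
have hi := ltn_ord i; have hj := ltn_ord j.
move=> /orP[/orP[/orP[/orP[/orP[/eqP->|/eqP->]|/eqP->]|/eqP->]|/eqP->]|/eqP->];
  [exists (HorEO i j)|exists (HorOE i j.+1)|exists (HorOE i.+1 j)
  |exists (HorEO i.+1 j)|exists (Vert i j)|exists (Vert i j.+1)] => //=; lia.
Qed.

Lemma PVsP v : v \in PVs p q <->
  (exists y m, valid_Ev y m /\ v = Ev y m) \/ (exists y m, valid_Ov y m /\ v = Ov y m).
Proof.
split.
  case/bigcupP=> e /PE_labelP[l hl ->].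
  have := valid_label_ends hl; case: l hl => y m /= _ [hE hO];
    rewrite !inE => /orP[]/eqP->;
    first [by left; exists y, m | by right; exists y, m
          | by right; exists y, m.+1 | by right; exists y.+1, m].
have edge_in l v' : valid_label l -> v' \in edge_of l -> v' \in PVs p q.
  by move=> hl hv; apply/bigcupP; exists (edge_of l) => //; apply: valid_edge_in_PE.
case=> [[y [m [hE ->]]]|[y [m [hO ->]]]].
- rewrite /valid_Ev in hE; case: (ltnP m q) => h.
    by apply: (@edge_in (HorEO y m)); rewrite /= ?inE ?eqxx //; lia.
  by apply: (@edge_in (Vert y m)); rewrite /= ?inE ?eqxx //; lia.
- rewrite /valid_Ov in hO; case: (boolP ((y == p) && (m == q))) => h.
    apply: (@edge_in (HorEO y m.-1)); first by rewrite /=; lia.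
    by rewrite !inE (_ : m.-1.+1 = m) ?eqxx ?orbT //; lia.
  by apply: (@edge_in (HorOE y m)); rewrite /= ?inE ?eqxx //; lia.
Qed.

Definition in_matching (M : {set {set T}}) (l : edge_label) : bool :=
  valid_label l && (edge_of l \in M).

Lemma degree_count (M : {set {set T}}) v (ls : seq edge_label) :
  M \subset PE p q -> uniq ls ->
  (forall l, valid_label l -> (v \in edge_of l) = (l \in ls)) ->
  #|[set e in M | v \in e]| = count (in_matching M) ls.
Proof.
move=> sub uls hls.
set s := [seq edge_of l | l <- ls & in_matching M l].
have -> : [set e in M | v \in e] = [set x in s].
  apply/setP => e; rewrite !inE; apply/andP/idP.
    case=> eM ve; have /PE_labelP[l hv el] := subsetP sub e eM.
    apply/mapP; exists l => //.
    by rewrite mem_filter /in_matching hv -el eM -hls // -el.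
  case/mapP=> l; rewrite mem_filter => /andP[/andP[hv hM] hl] ->.
  by rewrite hM hls.
have us : uniq s.
  rewrite map_inj_in_uniq ?filter_uniq // => l l'.
  rewrite !mem_filter => /andP[/andP[hl _] _] /andP[/andP[hl' _] _].
  exact: edge_of_inj.
by rewrite cardsE (card_uniqP us) size_map size_filter.
Qed.

Lemma perfect_matchingP M : perfect_matching (PVs p q) (PE p q) M <->
  [/\ M \subset PE p q,
      (forall y m, valid_Ev y m -> count (in_matching M) (labels_at_Ev y m) = 1) &
      (forall y m, valid_Ov y m -> count (in_matching M) (labels_at_Ov y m) = 1)].
Proof.
have degE (sub : M \subset PE p q) y m : valid_Ev y m ->
    #|[set e in M | Ev y m \in e]| = count (in_matching M) (labels_at_Ev y m).
  by move=> hv; apply: degree_count (uniq_labels_at_Ev y m) _ => // l hl; apply: Ev_in_edge.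
have degO (sub : M \subset PE p q) y m : valid_Ov y m ->
    #|[set e in M | Ov y m \in e]| = count (in_matching M) (labels_at_Ov y m).
  by move=> hv; apply: degree_count (uniq_labels_at_Ov y m) _ => // l hl; apply: Ov_in_edge.
split=> [[sub deg]|[sub hE hO]].
  split=> // y m hv; [rewrite -degE // | rewrite -degO //]; apply: deg; apply/PVsP;
    by [left; exists y, m | right; exists y, m].
by split=> // v /PVsP[[y [m [hv ->]]]|[y [m [hv ->]]]]; rewrite ?degE ?degO ?hE ?hO.
Qed.

(* A height function: the position of the vertical matching edge between
   levels t - 1 and t, for 1 <= t <= p, extended by k 0 = 0, k p.+1 = q. *)
Definition height (k : nat -> nat) :=
  [/\ k 0 = 0, k p.+1 = q & forall t, t <= p -> k t <= k t.+1].

Lemma height_mono k : height k -> forall s t, s <= t -> t <= p.+1 -> k s <= k t.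
Proof.
case=> _ _ hm s t st; elim: t st => [|t IH] st tp.
  by rewrite leqn0 in st; rewrite (eqP st).
case: (ltngtP s t.+1) st => // [h|->] _; last by [].
by apply: leq_trans (IH h (ltnW tp)) (hm t _); lia.
Qed.

Lemma height_le k : height k -> forall t, t <= p.+1 -> k t <= q.
Proof. by move=> hk t ht; case: (hk) => _ kp _; rewrite -kp; apply: height_mono. Qed.

Definition in_height (k : nat -> nat) (l : edge_label) : bool :=
  match l with
  | HorOE y m => (m < k y) || (k y.+1 < m)
  | HorEO y m => (k y <= m) && (m < k y.+1)
  | Vert y m => m == k y.+1
  end.

Definition all_labels : seq edge_label :=
  [seq HorOE y m | y <- iota 0 p.+1, m <- iota 0 q.+1] ++
  [seq HorEO y m | y <- iota 0 p.+1, m <- iota 0 q.+1] ++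
  [seq Vert y m | y <- iota 0 p.+1, m <- iota 0 q.+1].

Lemma all_labels_valid l : valid_label l -> l \in all_labels.
Proof.
have pair_in (f : nat -> nat -> edge_label) y m : y <= p -> m <= q ->
    f y m \in [seq f y m | y <- iota 0 p.+1, m <- iota 0 q.+1].
  by move=> hy hm; apply: allpairs_f; rewrite mem_iota.
rewrite /all_labels mem_cat; case: l => y m hv; rewrite /= in hv.
- by apply/orP; left; apply: (pair_in HorOE); lia.
- by apply/orP; right; rewrite mem_cat; apply/orP; left; apply: (pair_in HorEO); lia.
- by apply/orP; right; rewrite mem_cat; apply/orP; right; apply: (pair_in Vert); lia.
Qed.

Definition matching_of (k : nat -> nat) : {set {set T}} :=
  [set e | e \in [seq edge_of l | l <- all_labels & valid_label l && in_height k l]].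

Lemma matching_of_mem k l : valid_label l -> (edge_of l \in matching_of k) = in_height k l.
Proof.
move=> hl; rewrite inE; apply/mapP/idP.
  case=> l'; rewrite mem_filter => /andP[/andP[hl' hk] _] /(edge_of_inj hl hl') ->.
  exact: hk.
by move=> hk; exists l => //; rewrite mem_filter hl hk all_labels_valid.
Qed.

Lemma matching_of_sub k : matching_of k \subset PE p q.
Proof.
apply/subsetP => e; rewrite inE => /mapP[l]; rewrite mem_filter => /andP[/andP[hl _] _] ->.
exact: valid_edge_in_PE.
Qed.

Lemma in_matching_of k l : in_matching (matching_of k) l = valid_label l && in_height k l.
Proof. by rewrite /in_matching; case: (boolP (valid_label l)) => // hl; rewrite matching_of_mem. Qed.

Lemma matching_of_perfect k : height k -> perfect_matching (PVs p q) (PE p q) (matching_of k).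
Proof.
move=> hk; have [k0 kp km] := hk.
have kq : forall t, t <= p.+1 -> k t <= q by apply: height_le.
apply/perfect_matchingP; split; first exact: matching_of_sub.
  move=> y m; rewrite /valid_Ev /= !in_matching_of /= => hv.
  have h1 : k y <= k y.+1 by apply: km; lia.
  have h2 : k y.+1 <= q by apply: kq; lia.
  have bot : y = 0 -> k y = 0 by move->.
  have top : y = p -> k y.+1 = q by move->.
  lia.
move=> y m; rewrite /valid_Ov => hv; rewrite (eq_count (in_matching_of k)).
case: y hv => [|y] hv.
  have : k 1 <= q by apply: kq.
  have : k 0 <= k 1 by apply: km.
  by case: m hv => [|m] hv /=; rewrite ?k0; lia.
have h1 : k y <= k y.+1 by apply: km; lia.
have h2 : k y.+1 <= k y.+2 by apply: km; lia.
have h3 : k y.+2 <= q by apply: kq; lia.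
have top : y.+1 = p -> k y.+2 = q by move=> yp; rewrite -kp -yp.
by case: m hv => [|m] hv /=; lia.
Qed.

(* Conversely, every perfect matching is the matching of a height function:
   apply the row lemma level after level. *)
Section Classification.
Variable M : {set {set T}}.
Hypothesis HM : perfect_matching (PVs p q) (PE p q) M.

Let hA y m := in_matching M (HorOE y m).
Let hB y m := in_matching M (HorEO y m).
(* The vertical edges arriving at level y from below and leaving it upwards;
   the virtual edges below Ov 0 0 and above Ev p q make the rows uniform. *)
Let vd y m := if y == 0 then m == 0 else in_matching M (Vert y.-1 m).
Let vu y m := if y == p then m == q else in_matching M (Vert y m).

Definition height_of (t : nat) : nat :=
  if t == 0 then 0
  else if t <= p then \sum_(m < q.+1) m * in_matching M (Vert t.-1 m) else q.

Lemma odd_cover_level y m : y <= p -> m <= q ->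
  ((0 < m) && hB y m.-1) + hA y m + vd y m = 1.
Proof.
case/perfect_matchingP: HM => _ _ hO hy hm.
case: (boolP ((y == 0) && (m == 0))) => [/andP[/eqP-> /eqP->]|h].
  by rewrite /hA /vd /in_matching /=.
have := hO y m (ltac:(rewrite /valid_Ov; lia)).
rewrite /hA /hB /vd; case: m hm h => [|m]; case: y hy => [|y] hy /=; rewrite ?addn0; lia.
Qed.

Lemma even_cover_level y m : y <= p -> m <= q -> hA y m + hB y m + vu y m = 1.
Proof.
case/perfect_matchingP: HM => _ hE _ hy hm.
case: (boolP ((y == p) && (m == q))) => [/andP[/eqP-> /eqP->]|h].
  by rewrite /hA /hB /vu /in_matching /= !eqxx /=; lia.
have := hE y m (ltac:(rewrite /valid_Ev; lia)); rewrite /= addn0 addnA.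
rewrite /hA /hB /vu; case: (eqVneq y p) => [yp|yp] //.
by subst y; rewrite /in_matching /= ltnn /=; lia.
Qed.

Lemma hB_last y : hB y q = false.
Proof. by rewrite /hB /in_matching /= ltnn andbF. Qed.

Lemma vu_inner y m : y < p -> vu y m = in_matching M (Vert y m).
Proof. by move=> yp; rewrite /vu ltn_eqF. Qed.

Lemma vd_height y : y <= p ->
  height_of y <= q /\ forall m, m <= q -> vd y m = (m == height_of y).
Proof.
elim: y => [|y IH] hy; first by split=> // m hm; rewrite /vd /height_of.
have [kq hvd] := IH (ltnW hy).
have [b [/andP[_ bq] hvu _ _]] := row_structure kq hvd (hB_last y)
  (fun m => odd_cover_level (ltnW hy)) (fun m => even_cover_level (ltnW hy)).
have kb : height_of y.+1 = b.
  rewrite /height_of /= hy.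
  transitivity (\sum_(i < q.+1) i * (i == b :> nat)); last by rewrite sum_select ltnS bq.
  by apply: eq_bigr => i _; rewrite -vu_inner // hvu // -ltnS.
rewrite kb; split=> // m hm.
by rewrite /vd /= -vu_inner // hvu.
Qed.

Lemma level_structure y : y <= p -> [/\ height_of y <= height_of y.+1,
  forall m, m <= q -> hA y m = (m < height_of y) || (height_of y.+1 < m),
  forall m, m <= q -> hB y m = (height_of y <= m) && (m < height_of y.+1) &
  forall m, m <= q -> vu y m = (m == height_of y.+1)].
Proof.
move=> hy; have [kq hvd] := vd_height hy.
have [b [/andP[ab bq] hvu hAb hBb]] := row_structure kq hvd (hB_last y)
  (fun m => odd_cover_level hy) (fun m => even_cover_level hy).
suff -> : height_of y.+1 = b by [].
case: (ltnP y p) => yp.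
  have [_ hvd'] := vd_height yp.
  by have := hvd' b bq; rewrite /vd /= -vu_inner // hvu // eqxx => /esym/eqP.
have ey : y = p by lia.
have := hvu q (leqnn q); rewrite /vu ey !eqxx => /esym/eqP <-.
by rewrite /height_of /= ltnn.
Qed.

Lemma height_of_height : height height_of.
Proof.
split=> //; first by rewrite /height_of /= ltnn.
by move=> t ht; case: (level_structure ht).
Qed.

Lemma in_matching_height l : valid_label l -> in_matching M l = in_height height_of l.
Proof.
case: l => y m /= hv; have hy : y <= p by lia.
- by have [_ hAk _ _] := level_structure hy; rewrite -/(hA y m) hAk //; lia.
- by have [_ _ hBk _] := level_structure hy; rewrite -/(hB y m) hBk //; lia.
- have [_ _ _ hvu] := level_structure hy.
  by rewrite -vu_inner ?hvu //; lia.
Qed.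

Lemma matching_of_height : M = matching_of height_of.
Proof.
case/perfect_matchingP: HM => sub _ _.
apply/setP => e; apply/idP/idP => h.
  have /PE_labelP [l hv el] := subsetP sub e h.
  by rewrite el matching_of_mem // -in_matching_height // /in_matching hv -el h.
have /PE_labelP [l hv el] := subsetP (matching_of_sub height_of) e h.
by move: h; rewrite el matching_of_mem // -in_matching_height // /in_matching hv.
Qed.

End Classification.

(* Cell (r, s) is hexagon s - 1 of row
   r - 1 when 1 <= r <= p and 1 <= s <= q; the other cells are virtual. *)
Definition is_cell (c : nat * nat) := (0 < c.1 <= p) && (0 < c.2 <= q).

Inductive step := Down | Right | Up.

Definition neighbour (c : nat * nat) (d : step) : nat * nat :=
  match d with Down => (c.1.-1, c.2) | Right => (c.1, c.2.+1) | Up => (c.1.+1, c.2.-1) end.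

Definition crossed_label (c : nat * nat) (d : step) : edge_label :=
  match d with
  | Down => HorEO c.1.-1 c.2.-1 | Right => Vert c.1.-1 c.2 | Up => HorOE c.1 c.2.-1
  end.

Definition cell_of (l : edge_label) : nat * nat :=
  match l with HorEO y m => (y.+1, m.+1) | Vert y m => (y.+1, m) | HorOE y m => (y, m.+1) end.

Definition step_of (l : edge_label) : step :=
  match l with HorEO _ _ => Down | Vert _ _ => Right | HorOE _ _ => Up end.

Lemma cell_of_crossed c d : 0 < c.1 -> 0 < c.2 -> cell_of (crossed_label c d) = c.
Proof. by case: c => r s /= h1 h2; case: d; rewrite /= ?prednK. Qed.

Definition shaded (k : nat -> nat) (c : nat * nat) : bool := (0 < c.2) && (k c.1 < c.2).

Definition cut k c d :=
  match d with
  | Up => ~~ shaded k c || shaded k (neighbour c d)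
  | _ => ~~ shaded k c && shaded k (neighbour c d)
  end.

Lemma in_height_cut k l : in_height k l = cut k (cell_of l) (step_of l).
Proof. case: l => y m; rewrite /cut /shaded /=; lia. Qed.

Lemma in_height_crossed k c d :
  0 < c.1 -> 0 < c.2 -> in_height k (crossed_label c d) = cut k c d.
Proof. by case: c => r s /= hr hs; rewrite in_height_cut; case: d; rewrite /= ?prednK. Qed.

Lemma in_height_enter k r : 0 < r -> in_height k (crossed_label (r, 0) Right) = cut k (r, 0) Right.
Proof. by move=> hr; rewrite in_height_cut /= prednK. Qed.

Definition shade_monotone k c d :=
  match d with
  | Up => shaded k (neighbour c d) ==> shaded k c
  | _ => shaded k c ==> shaded k (neighbour c d)
  end.

Lemma height_shade_monotone k c d : height k -> 0 < c.1 <= p -> shade_monotone k c d.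
Proof.
move=> hk /andP[h1 h2]; have [k0 kp km] := hk.
case: c h1 h2 => r s /= h1 h2; case: d; rewrite /shade_monotone /shaded /=; apply/implyP.
- have : k r.-1 <= k r by apply: (height_mono hk); lia.
  lia.
- lia.
- have : k r <= k r.+1 by apply: km.
  lia.
Qed.

Definition lost k k' c := shaded k c && ~~ shaded k' c.
Definition gained k k' c := ~~ shaded k c && shaded k' c.

Lemma cut_separates k k' c d : shade_monotone k c d -> shade_monotone k' c d ->
  (lost k k' (neighbour c d) && ~~ lost k k' c) || (gained k k' c && ~~ gained k k' (neighbour c d)) ->
  cut k c d && ~~ cut k' c d.
Proof.
rewrite /lost /gained /cut /shade_monotone; move: (neighbour c d) => t.
by case: d; move: (shaded k c) (shaded k' c) (shaded k t) (shaded k' t) => [] [] [] [].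
Qed.

Lemma step_separates k k' c d : height k -> height k' -> is_cell c ->
  (lost k k' (neighbour c d) && ~~ lost k k' c) || (gained k k' c && ~~ gained k k' (neighbour c d)) ->
  in_height k (crossed_label c d) && ~~ in_height k' (crossed_label c d).
Proof.
move=> hk hk' hc h; have [c1 c2] : 0 < c.1 /\ 0 < c.2 by move: hc; rewrite /is_cell; lia.
rewrite !in_height_crossed //; apply: cut_separates => //; apply: height_shade_monotone => //;
  move: hc; rewrite /is_cell; lia.
Qed.

(* Column s has phase (s - 1 + shift) mod 3.
   A phase-0 column is walked Down, then the snake steps Right at its
   bottom; a phase-1 column and the next (phase-2) column are walked
   together in a zigzag Right, Up, Right, Up, ..., leaving Right at the top.
   The shift is chosen so that the last column never has phase 1, and the
   snake starts at (start_row, 1).  snake_rank c is the position of c. *)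
Definition shift : nat := (q %% 3 == 2).
Definition phase (s : nat) : nat := (s.-1 + shift) %% 3.
Definition start_row : nat := if q %% 3 == 2 then 1 else p.

Definition snake_step (c : nat * nat) : step :=
  match phase c.2 with
  | 0 => if 1 < c.1 then Down else Right
  | 1 => Right
  | _ => if c.1 < p then Up else Right
  end.

Definition snake_rank (c : nat * nat) : nat :=
  match phase c.2 with
  | 0 => p * c.2.-1 + (p - c.1)
  | 1 => p * c.2.-1 + 2 * c.1.-1
  | _ => p * c.2.-2 + (2 * c.1).-1
  end.

Lemma phase_lt s : phase s < 3.
Proof. rewrite /phase; lia. Qed.

Lemma phaseS s : 0 < s -> phase s.+1 = (phase s).+1 %% 3.
Proof. rewrite /phase /shift; lia. Qed.

Lemma phase_prev s : 1 < s -> phase s.-1 = (phase s).+2 %% 3.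
Proof. rewrite /phase /shift; lia. Qed.

Lemma phase1_not_last s : s <= q -> phase s = 1 -> s < q.
Proof.
move=> sq hs; rewrite ltn_neqAle sq andbT; apply/eqP => eq.
by move: hs; rewrite eq /phase /shift; lia.
Qed.

Lemma phase2_not_first s : 0 < s -> phase s = 2 -> 1 < s.
Proof.
move=> s0 hs; case: (ltngtP s 1) => // h; first lia.
by move: hs; rewrite h /phase /shift; lia.
Qed.

Lemma start_row_cell : 0 < start_row <= p.
Proof. by rewrite /start_row; case: ifP; lia. Qed.

Lemma mul_pred n : 0 < n -> p * n = p * n.-1 + p.
Proof. by move=> hn; rewrite -{1}(prednK hn) mulnS addnC. Qed.

Lemma snake_rank_lt c : is_cell c -> snake_rank c < p * q.
Proof.
case: c => r s; rewrite /is_cell /= => /andP[/andP[r1 r2] /andP[s1 s2]].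
have l1 : p * s <= p * q by rewrite leq_mul2l s2 orbT.
have e1 := mul_pred s1.
rewrite /snake_rank /=; case hT: (phase s) => [|[|t]] /=.
- lia.
- have sq := phase1_not_last s2 hT.
  have l2 : p * s.+1 <= p * q by rewrite leq_mul2l sq orbT.
  have e2 := mul_pred (ltn0Sn s); rewrite /= in e2; lia.
- have s2' : 1 < s by apply: phase2_not_first; move: (phase_lt s); rewrite hT; lia.
  have e2 : p * s.-1 = p * s.-2 + p by apply: mul_pred; lia.
  lia.
Qed.

Lemma snake_rank_step c : is_cell c -> is_cell (neighbour c (snake_step c)) ->
  snake_rank c < snake_rank (neighbour c (snake_step c)).
Proof.
case: c => r s; rewrite /is_cell /= => /andP[/andP[r1 r2] /andP[s1 s2]].
have e1 := mul_pred s1.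
rewrite /snake_step /=; case hT: (phase s) => [|[|t]] /=.
- case: ifP => h /=; rewrite /snake_rank /= ?hT /=; first lia.
  by rewrite phaseS // hT /=; lia.
- by rewrite /snake_rank /= hT phaseS // hT /=; lia.
- have hT2 : phase s = 2 by move: (phase_lt s); rewrite hT; lia.
  have s2' := phase2_not_first s1 hT2.
  have e2 : p * s.-1 = p * s.-2 + p by apply: mul_pred; lia.
  case: ifP => h /=.
    have ht : phase s.-1 = 1 by rewrite phase_prev // hT2.
    by rewrite /snake_rank /= hT ht /=; lia.
  by rewrite /snake_rank /= hT phaseS // hT2 /=; lia.
Qed.

Lemma snake_rank0 c : is_cell c -> snake_rank c = 0 -> c = (start_row, 1).
Proof.
case: c => r s; rewrite /is_cell /= => /andP[/andP[r1 r2] /andP[s1 s2]].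
rewrite /snake_rank /= /start_row; case hT: (phase s) => [|[|t]] /= h.
- have s1' : s = 1 by move: h; case: s s1 {hT s2} => [|[|s]] //= _; lia.
  by move: hT; rewrite s1' /phase /shift; case: eqP => // _ _; congr pair; lia.
- have s1' : s = 1 by move: h; case: s s1 {hT s2} => [|[|s]] //= _; lia.
  by move: hT; rewrite s1' /phase /shift; case: eqP => // _ _; congr pair; lia.
- by move: h; move: (p * s.-2) => u; lia.
Qed.

Lemma snake_pred c : is_cell c -> 0 < snake_rank c ->
  exists2 c', is_cell c' & neighbour c' (snake_step c') = c /\ snake_rank c' < snake_rank c.
Proof.
case: c => r s; rewrite /is_cell /= => /andP[/andP[r1 r2] /andP[s1 s2]].
have e1 := mul_pred s1.
rewrite /snake_rank /=; case hT: (phase s) => [|[|t]] /= hpos.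
- (* down a phase-0 column, or Right from the top of the previous column *)
  case: (ltnP r p) => hr.
    exists (r.+1, s); first by rewrite /is_cell /=; lia.
    by rewrite /snake_step /snake_rank /= hT /= ltnS r1 /=; split; [congr pair; lia | lia].
  have s2' : 1 < s by lia.
  have ht : phase s.-1 = 2 by rewrite phase_prev // hT.
  have s4 : 1 < s.-1 by apply: phase2_not_first ht; lia.
  have e2 : p * s.-1 = p * s.-2 + p by apply: mul_pred; lia.
  have e3 : p * s.-2 = p * s.-2.-1 + p by apply: mul_pred; lia.
  exists (p, s.-1); first by rewrite /is_cell /=; lia.
  rewrite /snake_step /snake_rank /= ht /= ltnn /= prednK //=; split; [congr pair; lia | lia].
- (* Up from the next column, or Right from the bottom of a phase-0 column *)
  case: (ltnP 1 r) => hr.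
    have sq := phase1_not_last s2 hT.
    exists (r.-1, s.+1); first by rewrite /is_cell /=; lia.
    rewrite /snake_step /snake_rank /= phaseS // hT /= (_ : r.-1 < p) /=; last lia.
    by split; [congr pair; lia | lia].
  have s2' : 1 < s by lia.
  have ht : phase s.-1 = 0 by rewrite phase_prev // hT.
  have e2 : p * s.-1 = p * s.-2 + p by apply: mul_pred; lia.
  exists (1, s.-1); first by rewrite /is_cell /=; lia.
  rewrite /snake_step /snake_rank /= ht /= prednK //=; split; [congr pair; lia | lia].
- (* Right from the phase-1 column *)
  have hT2 : phase s = 2 by move: (phase_lt s); rewrite hT; lia.
  have s2' := phase2_not_first s1 hT2.
  have ht : phase s.-1 = 1 by rewrite phase_prev // hT2.
  have e2 : p * s.-1 = p * s.-2 + p by apply: mul_pred; lia.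
  exists (r, s.-1); first by rewrite /is_cell /=; lia.
  rewrite /snake_step /snake_rank /= ht /= prednK //=; split; [congr pair; lia | lia].
Qed.

Definition cell_list : seq (nat * nat) := [seq (r, s) | r <- iota 1 p, s <- iota 1 q].

Definition forcing_labels : seq edge_label :=
  crossed_label (start_row, 0) Right :: [seq crossed_label c (snake_step c) | c <- cell_list].

Definition forcing_edges : {set {set T}} := [set e | e \in map edge_of forcing_labels].

Lemma mem_cell_list c : (c \in cell_list) = is_cell c.
Proof.
case: c => r s; apply/allpairsP/idP => [[[a b] /=]|].
  by rewrite !mem_iota => -[ha hb [-> ->]]; rewrite /is_cell /=; lia.
rewrite /is_cell /= => h; exists (r, s); rewrite /= !mem_iota; split=> //; lia.
Qed.

Lemma forcing_labels_valid l : l \in forcing_labels -> valid_label l.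
Proof.
rewrite inE => /orP[/eqP->|/mapP[c]]; first by have := start_row_cell; rewrite /=; lia.
by rewrite mem_cell_list; case: c => r s; rewrite /is_cell /= => hc ->; case: snake_step => /=; lia.
Qed.

Lemma snake_label_in c : is_cell c -> crossed_label c (snake_step c) \in forcing_labels.
Proof. by move=> hc; rewrite inE; apply/orP; right; apply: map_f; rewrite mem_cell_list. Qed.

Lemma virtual_shading k k' c : height k -> height k' -> c.1 <= p.+1 -> c.2 <= q.+1 ->
  ~~ is_cell c -> shaded k c = shaded k' c.
Proof.
move=> hk hk'; have [k0 kp _] := hk; have [k0' kp' _] := hk'.
case: c => r s /= hr hs; rewrite /is_cell /shaded /= => hc.
case: (eqVneq r 0) => [->|r0]; first by rewrite k0 k0'.
case: (eqVneq r p.+1) => [->|rp]; first by rewrite kp kp'.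
have h1 := height_le hk hr; have h2 := height_le hk' hr; lia.
Qed.

Lemma neighbour_bound d c : is_cell c -> (neighbour c d).1 <= p.+1 /\ (neighbour c d).2 <= q.+1.
Proof. by case: c => r s; rewrite /is_cell /=; case: d => /=; lia. Qed.

Section Separation.
Variables k k' : nat -> nat.
Hypotheses (hk : height k) (hk' : height k').

Definition separating (l : edge_label) :=
  (l \in forcing_labels) && in_height k l && ~~ in_height k' l.

Lemma entry_separates : lost k k' (start_row, 1) ->
  separating (crossed_label (start_row, 0) Right).
Proof.
move=> hl; have start := start_row_cell; have /andP[s1 _] := start.
rewrite /separating !in_height_enter // inE eqxx orTb andTb.
apply: (cut_separates (@height_shade_monotone k (start_row, 0) Right hk start)
                      (@height_shade_monotone k' (start_row, 0) Right hk' start)).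
by rewrite /neighbour /= hl /lost /shaded.
Qed.

(* Walk the snake backwards from a lost cell until it is entered from a
   cell that is not lost, or through the entry edge. *)
Lemma lost_separated c : is_cell c -> lost k k' c -> exists l, separating l.
Proof.
have at_start c0 : is_cell c0 -> lost k k' c0 -> snake_rank c0 = 0 -> exists l, separating l.
  move=> hc hl r0; exists (crossed_label (start_row, 0) Right).
  by apply: entry_separates; rewrite -(snake_rank0 hc r0).
move: {2}(snake_rank c) (leqnn (snake_rank c)) => n.
elim: n c => [|n IH] c rc hc hl; case: (posnP (snake_rank c)) => r0; try exact: at_start c hc hl r0.
  lia.
have [c' hc' [hn hlt]] := snake_pred hc r0.
case: (boolP (lost k k' c')) => hl'; first by apply: (IH c') => //; lia.
exists (crossed_label c' (snake_step c')); rewrite /separating snake_label_in //=.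
by apply: step_separates => //; rewrite hn hl hl'.
Qed.

(* Walk the snake forwards from a gained cell until it leaves the gained
   region, possibly towards a virtual cell. *)
Lemma gained_separated c : is_cell c -> gained k k' c -> exists l, separating l.
Proof.
move: {2}(p * q - snake_rank c) (leqnn (p * q - snake_rank c)) => n.
elim: n c => [|n IH] c rc hc hg; first by have := snake_rank_lt hc; lia.
case: (boolP (let c' := neighbour c (snake_step c) in is_cell c' && gained k k' c')) => /=.
  move=> /andP[hc' hg']; have := snake_rank_step hc hc'; have := snake_rank_lt hc'.
  by move=> h1 h2; apply: IH hc' hg'; lia.
move=> hout.
exists (crossed_label c (snake_step c)); rewrite /separating snake_label_in //=.
apply: step_separates => //; rewrite hg /=; apply/orP; right.
have [b1 b2] := neighbour_bound (snake_step c) hc.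
move: hout; rewrite negb_and => /orP[hv|//].
by rewrite /gained (virtual_shading hk hk') //; case: (shaded k' _); rewrite ?andbF.
Qed.

Lemma matching_of_ext : (forall t, 0 < t <= p -> k t = k' t) ->
  matching_of k = matching_of k'.
Proof.
move=> h; have [k0 kp _] := hk; have [k0' kp' _] := hk'.
have ext t : t <= p.+1 -> k t = k' t.
  case: (eqVneq t 0) => [->|t0]; first by rewrite k0 k0'.
  case: (eqVneq t p.+1) => [->|tp]; first by rewrite kp kp'.
  by move=> ht; apply: h; lia.
apply/setP => e; rewrite !inE; congr (e \in map edge_of _).
apply: eq_in_filter => l _; case: (boolP (valid_label l)) => //= hl.
by case: l hl => y m /= hl; rewrite !ext //; lia.
Qed.

Lemma heights_separated : matching_of k != matching_of k' -> exists l, separating l.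
Proof.
move=> neq; have [t /andP[t0 tp] ne] : exists2 t, 0 < t <= p & k t != k' t.
  case: (boolP [forall t : 'I_p, k t.+1 == k' t.+1]) => [/forallP all_eq|/forallPn[t ne]].
    case/eqP: neq; apply: matching_of_ext => t /andP[t0 tp].
    have ht : t.-1 < p by lia.
    by have /eqP := all_eq (Ordinal ht); rewrite /= prednK.
  by exists t.+1; rewrite ?ltn_ord.
case: (ltngtP (k t) (k' t)) ne => // hlt _.
- apply: (@lost_separated (t, (k t).+1)); rewrite /is_cell /lost /shaded /=; last lia.
  by have := height_le hk' (leqW tp); lia.
- apply: (@gained_separated (t, (k' t).+1)); rewrite /is_cell /gained /shaded /=; last lia.
  by have := height_le hk (leqW tp); lia.
Qed.

End Separation.

Lemma forcing_edges_complete : complete_forcing_set (PVs p q) (PE p q) forcing_edges.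
Proof.
apply/complete_forcing_setP; split.
  apply/subsetP => e; rewrite inE => /mapP[l hl ->].
  exact/valid_edge_in_PE/forcing_labels_valid.
move=> M M' hM hM'; rewrite (matching_of_height hM) (matching_of_height hM') eq_sym.
move=> /(heights_separated (height_of_height hM) (height_of_height hM')).
case=> l /andP[/andP[hl hk] hk']; have hv := forcing_labels_valid hl.
exists (edge_of l); last by rewrite matching_of_mem.
by rewrite in_setI matching_of_mem // hk andbT inE map_f.
Qed.

Lemma card_forcing_edges : #|forcing_edges| = (p * q).+1.
Proof.
have cell_pos c : is_cell c -> 0 < c.1 /\ 0 < c.2 by rewrite /is_cell; lia.
have uniq_labels : uniq forcing_labels.
  rewrite /forcing_labels /= map_inj_in_uniq ?allpairs_uniq ?iota_uniq //.
  - apply/andP; split=> //; apply/mapP => -[c hc e]; move: hc; rewrite mem_cell_list => hc.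
    have [c1 c2] := cell_pos c hc; move: (congr1 cell_of e); rewrite !cell_of_crossed //=.
    by move=> ec; move: hc; rewrite -ec /is_cell /=; lia.
  - by move=> [a b] [c d] _ _.
  - move=> c c'; rewrite !mem_cell_list => hc hc' e.
    have [c1 c2] := cell_pos c hc; have [c1' c2'] := cell_pos c' hc'.
    by move: (congr1 cell_of e); rewrite !cell_of_crossed.
have uniq_edges : uniq (map edge_of forcing_labels).
  by rewrite map_inj_in_uniq // => l l' hl hl'; apply: edge_of_inj; exact: forcing_labels_valid.
rewrite /forcing_edges cardsE (card_uniqP uniq_edges) size_map /= size_map size_allpairs.
by rewrite !size_iota.
Qed.

(* Pairs of height functions whose matchings any complete forcing set must
   separate.  height_without r s and height_with r s agree except in row r,
   where the cell (r, s) is unshaded, resp. shaded; lowest shades every cell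
   and highest shades none. *)
Definition height_without (r s t : nat) : nat :=
  if t == 0 then 0 else if t < r then s.-1 else if t <= p then s else q.
Definition height_with (r s t : nat) : nat :=
  if t == 0 then 0 else if t <= r then s.-1 else if t <= p then s else q.
Definition lowest (t : nat) : nat := if t <= p then 0 else q.
Definition highest (t : nat) : nat := if t == 0 then 0 else q.

Lemma height_without_height r s : 0 < r <= p -> 0 < s <= q -> height (height_without r s).
Proof.
move=> hr hs; split=> //; first by rewrite /height_without /=; case: ifP; [lia|rewrite ltnn].
by move=> t ht; rewrite /height_without; do ! case: ifP; lia.
Qed.

Lemma height_with_height r s : 0 < r <= p -> 0 < s <= q -> height (height_with r s).
Proof.
move=> hr hs; split=> //; first by rewrite /height_with /=; case: ifP; [lia|rewrite ltnn].
by move=> t ht; rewrite /height_with; do ! case: ifP; lia.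
Qed.

Lemma lowest_height : height lowest.
Proof. by split; rewrite /lowest //= ?ltnn // => t ht; do ! case: ifP; lia. Qed.

Lemma highest_height : height highest.
Proof. by split; rewrite /highest //= => t ht; do ! case: ifP; lia. Qed.

Lemma shaded_with r s c : 0 < r <= p -> 0 < s ->
  shaded (height_with r s) c = shaded (height_without r s) c || (c == (r, s)).
Proof.
move=> hr hs; case: c => a b; rewrite /shaded /height_with /height_without /= xpair_eqE.
by do ! case: ifP; lia.
Qed.

Lemma separator_without_with r s l : 0 < r <= p -> 0 < s <= q ->
  in_height (height_without r s) l -> ~~ in_height (height_with r s) l -> cell_of l = (r, s).
Proof.
move=> hr hs; rewrite !in_height_cut /cut !shaded_with; try lia.
have hb : shaded (height_without r s) (r, s) = false.
  by rewrite /shaded /height_without /=; do ! case: ifP; lia.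
move: (neighbour (cell_of l) (step_of l)) => t.
case: (eqVneq (cell_of l) (r, s)) => // hc.
case: (eqVneq t (r, s)) => [->|ht]; rewrite ?hb.
  by case: (step_of l); rewrite /= ?andbF ?orbT.
by rewrite !orbF; case: (step_of l) => ->.
Qed.

Lemma separator_lowest_highest l :
  in_height lowest l -> ~~ in_height highest l -> ~~ is_cell (cell_of l).
Proof.
rewrite !in_height_cut /cut => h1 h2; apply/negP => hc; move: h1 h2.
have hlo : shaded lowest (cell_of l).
  by move: hc; rewrite /is_cell /shaded /lowest; case: (cell_of l) => a b /=; case: ifP; lia.
have hhi : shaded highest (cell_of l) = false.
  by move: hc; rewrite /is_cell /shaded /highest; case: (cell_of l) => a b /=; case: ifP; lia.
by rewrite hlo hhi; case: (step_of l); rewrite /= ?andbF ?orbT.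
Qed.

Definition test_pair (x : option ('I_p * 'I_q)) : (nat -> nat) * (nat -> nat) :=
  match x with
  | Some ij => (height_without ij.1.+1 ij.2.+1, height_with ij.1.+1 ij.2.+1)
  | None => (lowest, highest)
  end.

Definition test_cell (x : option ('I_p * 'I_q)) : option (nat * nat) :=
  if x is Some ij then Some (ij.1.+1, ij.2.+1) else None.

Definition cell_code (l : edge_label) : option (nat * nat) :=
  if is_cell (cell_of l) then Some (cell_of l) else None.

Lemma test_cell_inj : injective test_cell.
Proof.
by case=> [[i j]|] [[i' j']|] //= [ei ej]; congr (Some (_, _)); apply: val_inj.
Qed.

Lemma test_pair_heights x : height (test_pair x).1 /\ height (test_pair x).2.
Proof.
case: x => [[i j]|] /=; last by split; [exact: lowest_height | exact: highest_height].
have hi := ltn_ord i; have hj := ltn_ord j.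
by split; [apply: height_without_height | apply: height_with_height]; lia.
Qed.

Lemma test_pair_differ x : matching_of (test_pair x).2 != matching_of (test_pair x).1.
Proof.
apply/eqP; case: x => [[i j]|] /= E.
  have hv : valid_label (Vert i j.+1) by rewrite /=; have := ltn_ord i; have := ltn_ord j; lia.
  have := matching_of_mem (height_without i.+1 j.+1) hv.
  rewrite -E matching_of_mem //= /height_without /height_with /=.
  by rewrite ltnn leqnn ltn_ord; lia.
have hv : valid_label (Vert 0 0) by rewrite /=; lia.
have := matching_of_mem lowest hv; rewrite -E matching_of_mem //= /lowest /highest /=.
by case: ifP; lia.
Qed.

Lemma test_pair_separator x l : valid_label l ->
  in_height (test_pair x).1 l -> ~~ in_height (test_pair x).2 l -> cell_code l = test_cell x.
Proof.
rewrite /cell_code; case: x => [[i j]|] hl /= h1 h2.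
  have hi := ltn_ord i; have hj := ltn_ord j.
  by rewrite (separator_without_with _ _ h1 h2) /is_cell /= ?ifT //; lia.
by rewrite (negbTE (separator_lowest_highest h1 h2)).
Qed.

(* Every complete forcing set has at least pq + 1 edges: choosing for each
   test pair an edge of S separating it gives an injection into S. *)
Lemma cf_lower_bound S : complete_forcing_set (PVs p q) (PE p q) S -> (p * q).+1 <= #|S|.
Proof.
case/complete_forcing_setP => sub sep.
pose separates x e := [&& e \in S, e \in matching_of (test_pair x).1
                                 & e \notin matching_of (test_pair x).2].
have sepP x : exists e, separates x e.
  have [h1 h2] := test_pair_heights x.
  have [e] := sep _ _ (matching_of_perfect h1) (matching_of_perfect h2) (test_pair_differ x).
  by rewrite in_setI => /andP[eS e1] e2; exists e; apply/and3P.
pose f x := odflt set0 [pick e | separates x e].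
have fP x : separates x (f x).
  rewrite /f; case: pickP => [e he|none] //=.
  by have [e he] := sepP x; rewrite none in he.
have f_inj : injective f.
  move=> x y fxy; apply: test_cell_inj.
  have /and3P[fS fx1 fx2] := fP x; have /and3P[_ fy1 fy2] := fP y.
  rewrite -fxy in fy1 fy2.
  have /PE_labelP [l hl el] := subsetP sub _ fS.
  rewrite el !matching_of_mem // in fx1 fx2 fy1 fy2.
  by rewrite -(test_pair_separator hl fx1 fx2) (test_pair_separator hl fy1 fy2).
have : f @: [set: option ('I_p * 'I_q)] \subset S.
  by apply/subsetP => e /imsetP[x _ ->]; have /and3P[] := fP x.
by move/subset_leq_card; rewrite card_imset // cardsT card_option card_prod !card_ord.
Qed.

End Parallelogram.

Theorem mainTheorem8 (p q : nat) (hp : 1 <= p) (hq : 1 <= q) :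
  cf_is (PVs p q) (PE p q) (p * q).+1.
Proof.
split; last exact: cf_lower_bound.
by exists (forcing_edges p q); split; [exact: forcing_edges_complete | exact: card_forcing_edges].
Qed.
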